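(* $$\pi_{q^m}(\mathrm{MA}_n(\mathbb{F}_q))= \{ \sigma\in \mathrm{Maps}(\mathbb{F}_{q^m}^n,\mathbb{F}_{q^m}^n)~|~ \sigma\phi=\phi\sigma ~\forall~ \phi\in \mathrm{Gal}(\mathbb{F}_{q^m}:\mathbb{F}_q)\}.$$
   Context: $\mathrm{MA}_n(\mathbb{F}_q)$ denotes the set of polynomial maps $F=(F_1,\dots,F_n)$ with $F_i\in\mathbb{F}_q[X_1,\dots,X_n]$, and $\pi_{q^m}(F)$ is the induced map $\mathbb{F}_{q^m}^n\to\mathbb{F}_{q^m}^n$. The Galois group acts on $\mathbb{F}_{q^m}^n$ coordinatewise. *)

From HB Require Import structures.
From mathcomp Require Import all_boot all_order all_algebra all_field.
From mathcomp Require Import mpoly.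
Set Implicit Arguments. Unset Strict Implicit. Unset Printing Implicit Defensive.
Import GRing.Theory.
Local Open Scope ring_scope.

(* MA_n(F): polynomial maps F = (F_1,...,F_n), F_i in F[X_1..X_n]. *)
Definition polymap (F : finFieldType) (n : nat) := 'I_n -> {mpoly F[n]}.

(* pi_L(P): the induced map L^n -> L^n, for an extension L of F. *)
Definition induced_map (F : finFieldType) (L : fieldExtType F) (n : nat)
    (P : polymap F n) (x : 'I_n -> L) : 'I_n -> L :=
  fun i => (map_mpoly (in_alg L) (P i)).@[x].

Definition is_gal (F : finFieldType) (L : fieldExtType F) (phi : L -> L) : Prop :=
  [/\ bijective phi,
      (forall a b : L, phi (a + b) = phi a + phi b),
      (forall a b : L, phi (a * b) = phi a * phi b),
      phi 1 = 1 &
      (forall c : F, phi (c%:A) = c%:A)].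

Definition gal_act (L : Type) (n : nat) (phi : L -> L) (x : 'I_n -> L) : 'I_n -> L :=
  fun i => phi (x i).

From HB Require Import structures.
From mathcomp Require Import all_boot all_order all_algebra all_field.
From mathcomp Require Import mpoly.
From Stdlib Require Import FunctionalExtensionality.
Set Implicit Arguments. Unset Strict Implicit. Unset Printing Implicit Defensive.
Import GRing.Theory.
Local Open Scope ring_scope.

(* Polynomial maps commute with every F-automorphism of L because their
   coefficients lie in F.  Conversely, over a finite field K every function
   K^n -> K is a polynomial (Lagrange interpolation with the indicator
   1 - (X - a)^(|K|-1) of the point a), and interpolation commutes with
   automorphisms of K.  If sigma commutes with the Frobenius x |-> x^|F|,
   the interpolating polynomials of its coordinates are fixed by it, so
   their coefficients are Frobenius-fixed, i.e. lie in F. *)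

Lemma rmorphism_of_morph_laws (R S : nzRingType) (f : R -> S) :
  (forall a b, f (a + b) = f a + f b) ->
  (forall a b, f (a * b) = f a * f b) -> f 1 = 1 ->
  {g : {rmorphism R -> S} | f =1 g}.
Proof.
move=> fD fM f1.
have fB : zmod_morphism f.
  by move=> x y; apply: (@addIr _ (f y)); rewrite -fD !subrK.
pose g : {rmorphism R -> S} :=
  HB.pack f (GRing.isZmodMorphism.Build _ _ f fB)
    (GRing.isMonoidMorphism.Build _ _ f (conj f1 fM)).
by exists g.
Qed.

Section MpolyMorphism.
Variables (n : nat) (R S : comNzRingType) (g : {rmorphism R -> S}).

Lemma rmorph_meval (p : {mpoly R[n]}) (x : 'I_n -> R) :
  g p.@[x] = (map_mpoly g p).@[fun i => g (x i)].
Proof.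
rewrite (mpolyE p) (big_morph _ (raddfD (map_mpoly g)) (raddf0 _)) /=.
rewrite !(big_morph _ (mevalD _) (meval0 _)) rmorph_sum.
apply: eq_bigr => m _; rewrite map_mpolyZ map_mpolyX !mevalZ !mevalX rmorphM rmorph_prod.
by congr (_ * _); apply: eq_bigr => i _; rewrite rmorphXn.
Qed.

Lemma map_mpoly_lift (p : {mpoly S[n]}) :
  (forall m, exists c, p@_m = g c) -> exists q : {mpoly R[n]}, map_mpoly g q = p.
Proof.
move=> coef_img; have {}coef_img m : exists c, p@_m == g c.
  by have [c ->] := coef_img m; exists c.
exists (\sum_(m <- msupp p) xchoose (coef_img m) *: 'X_[m]).
rewrite raddf_sum /= [RHS]mpolyE; apply: eq_bigr => m _.
by rewrite map_mpolyZ map_mpolyX -(eqP (xchooseP (coef_img m))).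
Qed.

End MpolyMorphism.

Section FiniteFieldInterpolation.
Variables (K : finFieldType) (n : nat).
Implicit Types (a : {ffun 'I_n -> K}) (x : 'I_n -> K).

Lemma expf_card_pred_indicator (y : K) : 1 - y ^+ #|K|.-1 = (y == 0)%:R.
Proof.
have K_gt1 : (1 < #|K|)%N := finNzRing_gt1 K.
have [->|y_nz] := eqVneq y 0; first by rewrite expr0n -(subnKC K_gt1) subr0.
apply/eqP; rewrite subr_eq0 eq_sym; apply/eqP/(mulfI y_nz).
by rewrite mulr1 -exprS prednK ?expf_card // ltnW.
Qed.

Definition mdelta a : {mpoly K[n]} :=
  \prod_(i < n) (1 - ('X_i - (a i)%:MP) ^+ #|K|.-1).

Definition minterp (s : ('I_n -> K) -> K) : {mpoly K[n]} :=
  \sum_(a : {ffun 'I_n -> K}) s a *: mdelta a.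

Lemma meval_mdelta a x : (mdelta a).@[x] = ([ffun i => x i] == a)%:R.
Proof.
have meval_factor i : (1 - ('X_i - (a i)%:MP) ^+ #|K|.-1).@[x] = (x i == a i)%:R.
  rewrite mevalB meval1 rmorphXn /= mevalB mevalXU mevalC.
  by rewrite expf_card_pred_indicator subr_eq0.
rewrite /mdelta rmorph_prod /=; under eq_bigr do rewrite meval_factor.
have [<-|ne_a] := eqVneq; first by apply: big1 => i _; rewrite ffunE eqxx.
have [i ne_i] : exists i, x i != a i.
  apply/existsP; apply: contraR ne_a; rewrite negb_exists => /forallP eq_xa.
  by apply/eqP/ffunP => i; rewrite ffunE; apply/eqP/negPn.
by rewrite (bigD1 i) //= (negbTE ne_i) mul0r.
Qed.

Lemma meval_minterp s x : (minterp s).@[x] = s x.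
Proof.
rewrite /minterp raddf_sum (bigD1 [ffun i => x i]) //= big1 => [|a ne_a].
  rewrite addr0 mevalZ meval_mdelta eqxx mulr1.
  by congr s; apply: functional_extensionality => i; rewrite ffunE.
by rewrite mevalZ meval_mdelta eq_sym (negbTE ne_a) mulr0.
Qed.

Lemma map_minterp (g : {rmorphism K -> K}) s :
  (forall x, g (s x) = s (fun i => g (x i))) -> map_mpoly g (minterp s) = minterp s.
Proof.
move=> s_equiv; pose ga a := [ffun i => g (a i)].
have ga_inj : injective ga.
  move=> a b /ffunP eq_ab; apply/ffunP => i.
  by have := eq_ab i; rewrite !ffunE => /fmorph_inj.
rewrite /minterp rmorph_sum [RHS](reindex_inj ga_inj); apply: eq_bigr => a _.
have -> : s (ga a) = g (s a).
  by rewrite s_equiv; congr s; apply: functional_extensionality => i; rewrite ffunE.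
rewrite /= map_mpolyZ rmorph_prod; congr (_ *: _); apply: eq_bigr => i _.
by rewrite rmorphB rmorph1 rmorphXn rmorphB /= map_mpolyC map_mpolyX ffunE.
Qed.

End FiniteFieldInterpolation.

Section Frobenius.
Variables (F : finFieldType) (L : fieldExtType F).

Lemma exprcardF_additive (x y : L) : (x + y) ^+ #|F| = x ^+ #|F| + y ^+ #|F|.
Proof.
have [p _ pcharFp] := finPcharP F; rewrite (card_pprimeChar pcharFp).
have pcharLp : p \in [pchar L] by rewrite (pchar_lalg L).
elim: (logn _ _) x y => [|k IHk] x y; first by rewrite !expr1.
by rewrite expnSr !exprM IHk -!(pFrobenius_autE pcharLp) rmorphD.
Qed.

Lemma frobenius_rmorphism : {g : {rmorphism L -> L} | forall x, g x = x ^+ #|F|}.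
Proof.
have [g gE] := @rmorphism_of_morph_laws L L (fun x => x ^+ #|F|)
  exprcardF_additive (fun a b => exprMn _ a b) (expr1n _ _).
by exists g => x; rewrite -gE.
Qed.

Lemma frobenius_fixed_in_alg (a : L) : a ^+ #|F| = a -> exists c : F, a = c%:A.
Proof.
move=> a_fixed; have : a \in (1%VS : {vspace L}).
  by rewrite Fermat's_little_theorem dimv1 expn1 a_fixed.
by case/vlineP=> c ->; exists c.
Qed.

Lemma frobenius_is_gal (g : {rmorphism L -> L}) :
  (forall x, g x = x ^+ #|F|) -> is_gal g.
Proof.
move=> gE; split; [|exact: rmorphD|exact: rmorphM|exact: rmorph1|].
  exact: (injF_bij (fmorph_inj g : injective (g : FinFieldExtType L -> _))).
by move=> c; rewrite gE -in_algE -rmorphXn expf_card.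
Qed.

End Frobenius.

Section PolynomialMaps.
Variables (F : finFieldType) (L : fieldExtType F) (n : nat).

Lemma induced_map_gal_commute (P : polymap F n) (phi : L -> L) :
  is_gal phi -> forall x i,
  induced_map P (gal_act phi x) i = gal_act phi (induced_map P x) i.
Proof.
case=> _ phiD phiM phi1 phiF x i; have [g gE] := rmorphism_of_morph_laws phiD phiM phi1.
rewrite /gal_act /induced_map gE rmorph_meval.
have -> : map_mpoly g (map_mpoly (in_alg L) (P i)) = map_mpoly (in_alg L) (P i).
  by apply/mpolyP => m; rewrite !mcoeff_map_mpoly /= -gE phiF.
by congr meval; apply: functional_extensionality => j; rewrite gE.
Qed.

Lemma frobenius_equivariant_induced (g : {rmorphism L -> L})
    (sigma : ('I_n -> L) -> ('I_n -> L)) :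
  (forall x, g x = x ^+ #|F|) ->
  (forall x i, sigma (gal_act g x) i = g (sigma x i)) ->
  exists P : polymap F n, forall x i, sigma x i = induced_map P x i.
Proof.
move=> gE sigma_equiv.
pose s i : ('I_n -> FinFieldExtType L) -> FinFieldExtType L := sigma^~ i.
have s_fixed i : map_mpoly g (minterp (s i)) = minterp (s i).
  by apply: (@map_minterp (FinFieldExtType L) n g) => x; rewrite /s -sigma_equiv.
have coef_in_F i m : exists c, (minterp (s i))@_m = in_alg L c.
  by apply: frobenius_fixed_in_alg; rewrite -gE -mcoeff_map_mpoly s_fixed.
have [P PE] := fin_all_exists (fun i => map_mpoly_lift (coef_in_F i)).
by exists P => x i; rewrite /induced_map PE (@meval_minterp (FinFieldExtType L)).
Qed.

End PolynomialMaps.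

Theorem mainTheorem6 (F : finFieldType) (L : fieldExtType F) (n : nat)
    (sigma : ('I_n -> L) -> ('I_n -> L)) :
  (exists P : polymap F n, forall x i, sigma x i = @induced_map F L n P x i) <->
  (forall phi : L -> L, @is_gal F L phi ->
     forall x i, sigma (gal_act phi x) i = gal_act phi (sigma x) i).
Proof.
split=> [[P sigmaE] | sigma_gal].
  have -> : sigma = induced_map P.
    by do 2!apply: functional_extensionality => ?; apply: sigmaE.
  exact: induced_map_gal_commute.
have [g gE] := frobenius_rmorphism L.
apply: (frobenius_equivariant_induced gE) => x i.
exact: sigma_gal (frobenius_is_gal gE) x i.
Qed.
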